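(* Let $f\in\mathbb B(X)$ be monotone and $x\in X$. Then $$\mathbf{Bz}_x(\omega_f)=\mathbf{Bz}_x(\nu_f)=\mathbf I_x(f).$$
   Context: $X$ is a fixed finite set of $n=|X|$ variables; $\mathbb B(X)$ is the set of Boolean functions $\{0,1\}^X\to\{0,1\}$; $f_{x/c}$ is $f$ with $x$ fixed to $c$; $f$ is monotone if $f_{x/1}\ge f_{x/0}$ pointwise for every $x$. For assignments $\mathbf u$ over $S$ and $\mathbf w$ over $X\setminus S$, $\mathbf u;\mathbf w$ is their concatenation. Influence: $\mathbf I_x(f)=\mathbb E[f_{x/1}\oplus f_{x/0}]$ (uniform distribution on $\{0,1\}^X$). For a cooperative game $v:2^X\to\mathbb R$, $\partial_xv(S)=v(S\cup\{x\})-v(S\setminus\{x\})$ and the Banzhaf value is $\mathbf{Bz}_x(v)=2^{-(n-1)}\sum_{S\subseteq X\setminus\{x\}}\partial_xv(S)$. Dominating CGM: $\omega_f(S)=1$ if $\exists\mathbf u\in\{0,1\}^S\ \forall\mathbf w\in\{0,1\}^{X\setminus S}: f(\mathbf u;\mathbf w)=1$, else $0$. Rectifying CGM: $\nu_f(S)=1$ if $\forall\mathbf w\in\{0,1\}^{X\setminus S}\ \exists\mathbf u\in\{0,1\}^S: f(\mathbf u;\mathbf w)=1$, else $0$. *)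

From mathcomp Require Import all_boot all_order all_algebra.
Set Implicit Arguments. Unset Strict Implicit. Unset Printing Implicit Defensive.
Import GRing.Theory Num.Theory.
Local Open Scope ring_scope.

Definition assignment (X : finType) := {ffun X -> bool}.
Definition boolfun (X : finType) := assignment X -> bool.

Definition setvar (X : finType) (a : assignment X) (x : X) (c : bool) : assignment X :=
  [ffun y => if y == x then c else a y].
Definition restrict (X : finType) (f : boolfun X) (x : X) (c : bool) : boolfun X :=
  fun a => f (setvar a x c).

Definition monotone (X : finType) (f : boolfun X) : Prop :=
  forall (x : X) (a : assignment X), (restrict f x false a <= restrict f x true a)%N.

Definition concat (X : finType) (S : {set X}) (u w : assignment X) : assignment X :=
  [ffun y => if y \in S then u y else w y].

Definition influence (X : finType) (f : boolfun X) (x : X) : rat :=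
  (2%:R ^+ #|X|)^-1 *
  \sum_(a : assignment X) ((restrict f x true a (+) restrict f x false a : bool)%:R).

Definition game (X : finType) := {set X} -> rat.
Definition deriv (X : finType) (v : game X) (x : X) (S : {set X}) : rat :=
  v (x |: S) - v (S :\ x).
Definition banzhaf (X : finType) (v : game X) (x : X) : rat :=
  (2%:R ^+ (#|X| - 1))^-1 * \sum_(S : {set X} | S \subset [set~ x]) deriv v x S.

Definition omega (X : finType) (f : boolfun X) : game X := fun S =>
  ([exists u : assignment X, forall w : assignment X, f (concat S u w)] : bool)%:R.
Definition nu (X : finType) (f : boolfun X) : game X := fun S =>
  ([forall w : assignment X, exists u : assignment X, f (concat S u w)] : bool)%:R.

From Pilot Require Import Defs.
From mathcomp Require Import all_boot all_order all_algebra.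
From mathcomp Require Import ring.
Set Implicit Arguments. Unset Strict Implicit. Unset Printing Implicit Defensive.
Import GRing.Theory.
Local Open Scope ring_scope.

(* Identify a coalition S with its indicator assignment [ind S].  For a
   monotone f both characteristic games collapse to the "indicator game"
   S |-> f (ind S): extending an assignment pointwise can only switch f on,
   so "some u on S forces f for all w" and "for all w some u on S yields f"
   are both equivalent to f holding when S is set to 1 and the rest to 0.
   The Banzhaf marginal contribution of x to S in the indicator game is then
   f_{x/1}(ind S) - f_{x/0}(ind S), which for monotone f is the Boolean
   difference f_{x/1} xor f_{x/0} at ind S.  Summing over all 2^n
   assignments counts every coalition S not containing x twice (as S and as
   x |: S), which turns the normalisation 2^{-n} of the influence into the
   normalisation 2^{-(n-1)} of the Banzhaf value. *)

Section Monotone.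

Variable X : finType.
Implicit Types (f : boolfun X) (a b : assignment X) (y : X).

Lemma setvar_id a y : setvar a y (a y) = a.
Proof. by apply/ffunP=> z; rewrite ffunE; case: eqP => [->|]. Qed.

Lemma monotone_setvar_true f a y : monotone f -> f a -> f (setvar a y true).
Proof.
move=> mono_f; rewrite -{1}(setvar_id a y); case: (a y) => // fa.
by have := mono_f y a; rewrite /restrict fa lt0b.
Qed.

(* Monotonicity in each variable gives monotonicity for the pointwise
   order, by switching on the differing variables one at a time. *)
Lemma monotone_pointwise f a b :
  monotone f -> (forall y, a y <= b y)%N -> f a -> f b.
Proof.
move=> mono_f; move card_diff: #|[set y | a y != b y]| => k.
elim: k a card_diff => [|k IHk] a card_diff a_le_b fa.
  suff -> : b = a by [].
  move/eqP: card_diff; rewrite cards_eq0 => /eqP/setP no_diff.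
  by apply/ffunP=> y; move: (no_diff y); rewrite !inE => /negbFE/eqP.
have [y] : exists y, y \in [set y | a y != b y].
  by apply/set0Pn; rewrite -card_gt0 card_diff.
rewrite inE => diff_y.
have [ay_false by_true] : a y = false /\ b y = true.
  by move: (a_le_b y) diff_y; case: (a y); case: (b y).
apply: (IHk (setvar a y true)); last exact: monotone_setvar_true.
- have -> : [set z | setvar a y true z != b z] = [set z | a z != b z] :\ y.
    apply/setP=> z; rewrite !inE ffunE.
    by case: (z =P y) => [->|] //=; rewrite by_true.
  by move: card_diff; rewrite (cardsD1 y) inE diff_y => -[].
- move=> z; rewrite ffunE; case: eqP => [->|_]; first by rewrite by_true.
  exact: a_le_b.
Qed.

Definition ind (S : {set X}) : assignment X := [ffun y => y \in S].

Lemma concat_false_le_ind (S : {set X}) u y :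
  (concat S u [ffun=> false] y <= ind S y)%N.
Proof. by rewrite !ffunE; case: (y \in S); case: (u y). Qed.

Lemma ind_le_concat_true (S : {set X}) w y :
  (ind S y <= concat S [ffun=> true] w y)%N.
Proof. by rewrite !ffunE; case: (y \in S). Qed.

Lemma omega_indicator f (S : {set X}) :
  monotone f -> omega f S = (f (ind S))%:R.
Proof.
move=> mono_f; rewrite /omega; congr (nat_of_bool _)%:R; apply/existsP/idP.
  case=> u /forallP /(_ [ffun=> false]).
  exact/monotone_pointwise/concat_false_le_ind.
move=> f_ind; exists [ffun=> true]; apply/forallP=> w.
exact: monotone_pointwise (ind_le_concat_true S w) f_ind.
Qed.

Lemma nu_indicator f (S : {set X}) :
  monotone f -> nu f S = (f (ind S))%:R.
Proof.
move=> mono_f; rewrite /nu; congr (nat_of_bool _)%:R; apply/forallP/idP.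
  move=> /(_ [ffun=> false]) /existsP [u].
  exact/monotone_pointwise/concat_false_le_ind.
move=> f_ind w; apply/existsP; exists [ffun=> true].
exact: monotone_pointwise (ind_le_concat_true S w) f_ind.
Qed.

End Monotone.

Lemma sum_assignments_as_coalitions (X : finType) (R : nmodType)
    (F : assignment X -> R) :
  \sum_(a : assignment X) F a = \sum_(S : {set X}) F (ind S).
Proof.
rewrite (reindex (@ind X)) //.
exists (fun a : assignment X => [set y | a y]) => [S _|a _].
  by apply/setP=> y; rewrite inE ffunE.
by apply/ffunP=> y; rewrite ffunE inE.
Qed.

Lemma sum_coalitions_ignoring (X : finType) (R : nmodType) (x : X)
    (G : {set X} -> R) :
  (forall S, G (x |: S) = G S) ->
  \sum_(S : {set X}) G S = (\sum_(S : {set X} | S \subset [set~ x]) G S) *+ 2.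
Proof.
move=> G_ignores_x.
have avoid_x (S : {set X}) : (S \subset [set~ x]) = (x \notin S).
  by rewrite subsetC sub1set inE.
rewrite (bigID (fun S : {set X} => x \in S)) /= mulr2n (eq_bigl _ _ avoid_x).
congr (_ + _).
rewrite (reindex_onto (fun S => x |: S) (fun S => S :\ x)) /=; last first.
  by move=> S x_in_S; rewrite setD1K.
apply: eq_big => [S|S _]; last exact: G_ignores_x.
rewrite setU11 /=; apply/eqP/idP => [<-|x_notin_S]; first by rewrite setD11.
by rewrite setU1K.
Qed.

Lemma eq_banzhaf (X : finType) (v w : game X) (x : X) :
  v =1 w -> banzhaf v x = banzhaf w x.
Proof.
move=> v_eq_w; rewrite /banzhaf; congr (_ * _).
by apply: eq_bigr => S _; rewrite /Defs.deriv !v_eq_w.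
Qed.

Section IndicatorGame.

Variables (X : finType) (f : boolfun X) (x : X).

Definition indicator_game : game X := fun S => (f (ind S))%:R.

Definition pivot (S : {set X}) : rat :=
  (restrict f x true (ind S))%:R - (restrict f x false (ind S))%:R.

Lemma setvar_ind (S : {set X}) (c : bool) :
  setvar (ind S) x c = ind (if c then x |: S else S :\ x).
Proof.
apply/ffunP=> y; rewrite !ffunE; case: eqP => [->|/eqP y_neq_x].
  by case: c; rewrite !inE eqxx.
by case: c; rewrite !inE (negbTE y_neq_x).
Qed.

Lemma deriv_indicator_game (S : {set X}) :
  Defs.deriv indicator_game x S = pivot S.
Proof. by rewrite /Defs.deriv /pivot /restrict !setvar_ind. Qed.

Lemma pivot_setU1 (S : {set X}) : pivot (x |: S) = pivot S.
Proof.
by rewrite /pivot /restrict !setvar_ind setUA setUid setDUl setDv set0U.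
Qed.

Lemma xor_restrict_monotone (a : assignment X) : monotone f ->
  ((restrict f x true a (+) restrict f x false a : bool)%:R : rat) =
  (restrict f x true a)%:R - (restrict f x false a)%:R.
Proof.
by move=> /(_ x a); case: (restrict f x true a); case: (restrict f x false a).
Qed.

Lemma banzhaf_indicator_game :
  monotone f -> banzhaf indicator_game x = influence f x.
Proof.
move=> mono_f; rewrite /banzhaf /influence.
under eq_bigr do rewrite deriv_indicator_game.
under [in RHS]eq_bigr do rewrite xor_restrict_monotone //.
rewrite sum_assignments_as_coalitions -/(pivot _).
rewrite (sum_coalitions_ignoring pivot_setU1).
have card_X : #|X| = (#|X| - 1).+1.
  by rewrite subn1 prednK //; apply/card_gt0P; exists x.
rewrite [in RHS]card_X exprS mulr2n.
by field; rewrite expf_neq0.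
Qed.

End IndicatorGame.

Theorem mainTheorem15 (X : finType) (f : boolfun X) (x : X) :
  monotone f ->
  banzhaf (omega f) x = influence f x /\ banzhaf (nu f) x = influence f x.
Proof.
move=> mono_f; rewrite -(banzhaf_indicator_game x mono_f).
by split; apply: eq_banzhaf => S; [exact: omega_indicator | exact: nu_indicator].
Qed.
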